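(* A modal formula is a theorem of $\mathrm{K4M}$ if and only if it is $d$-valid in every T$_D$ space that is crowded and openly irresolvable.
   Context: Modal formulas use propositional variables, Boolean connectives and $\Diamond,\Box$. A normal logic is a set of formulas containing all tautologies and all instances of $\Box(\varphi\to\psi)\to(\Box\varphi\to\Box\psi)$, closed under modus ponens and $\Box$-generalisation. $\mathrm{K4M}$ is the smallest normal logic containing all instances of $\Diamond\Diamond\varphi\to\Diamond\varphi$ and of the McKinsey scheme $\mathrm{M}:\ \Box\Diamond\varphi\to\Diamond\Box\varphi$. $d$-semantics: a model on a space $X$ is a valuation of variables by subsets of $X$; $\Diamond\varphi$ is interpreted as the set of limit points of the truth set of $\varphi$ ($x$ such that every $O-\{x\}$, $O$ an open neighbourhood of $x$, meets it), Boolean connectives as set operations, $\Box=\neg\Diamond\neg$. $\varphi$ is $d$-valid in $X$ if true at all points in all models on $X$. $X$ is T$_D$ if the set of limit points of each singleton is closed; crowded if it has no isolated points; irresolvable if it has no two disjoint non-empty dense subsets; openly irresolvable if every non-empty open subspace is irresolvable. *)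

From HB Require Import structures.
From mathcomp Require Import all_boot all_order.
From mathcomp Require Import all_classical all_reals topology.
Set Implicit Arguments. Unset Strict Implicit. Unset Printing Implicit Defensive.
Local Open Scope classical_set_scope.

Inductive form : Type :=
| Var : nat -> form
| Bot : form
| Imp : form -> form -> form
| Box : form -> form.

Definition Neg (p : form) : form := Imp p Bot.
Definition Top : form := Neg Bot.
Definition Or (p q : form) : form := Imp (Neg p) q.
Definition And (p q : form) : form := Neg (Imp p (Neg q)).
Definition Dia (p : form) : form := Neg (Box (Neg p)).

(** Propositional tautologies (substitution instances): formulas true under
    every Boolean valuation of their "atoms" (variables and boxed formulas). *)
Fixpoint beval (v : form -> bool) (p : form) : bool :=
  match p with
  | Var _ => v p
  | Bot => false
  | Imp a b => (~~ beval v a) || beval v b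
  | Box _ => v p
  end.

Definition tautology (p : form) : Prop := forall v : form -> bool, beval v p.

Inductive K4M : form -> Prop :=
| K4M_taut p : tautology p -> K4M p
| K4M_K p q : K4M (Imp (Box (Imp p q)) (Imp (Box p) (Box q)))
| K4M_4 p : K4M (Imp (Dia (Dia p)) (Dia p))
| K4M_M p : K4M (Imp (Box (Dia p)) (Dia (Box p)))
| K4M_MP p q : K4M (Imp p q) -> K4M p -> K4M q
| K4M_Nec p : K4M p -> K4M (Box p).

Fixpoint dsem (X : topologicalType) (v : nat -> set X) (p : form) : set X :=
  match p with
  | Var n => v n
  | Bot => set0
  | Imp a b => ~` dsem v a `|` dsem v b
  | Box a => ~` limit_point (~` dsem v a)
  end.

Definition d_valid (X : topologicalType) (p : form) : Prop :=
  forall (v : nat -> set X) (x : X), dsem v p x.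

Definition T_D (X : topologicalType) : Prop :=
  forall x : X, closed (limit_point [set x]).

Definition crowded (X : topologicalType) : Prop :=
  forall x : X, ~ isolated [set: X] x.

(** A is dense in the subspace U (subspace topology: opens are U `&` O). *)
Definition dense_in (X : topologicalType) (U A : set X) : Prop :=
  A `<=` U /\ forall O : set X, open O -> U `&` O !=set0 -> A `&` O !=set0.

Definition irresolvable_in (X : topologicalType) (U : set X) : Prop :=
  ~ exists A B : set X,
      [/\ dense_in U A, dense_in U B, A !=set0, B !=set0 & A `&` B = set0].

Definition irresolvable (X : topologicalType) : Prop :=
  irresolvable_in [set: X].

Definition openly_irresolvable (X : topologicalType) : Prop :=
  forall U : set X, open U -> U !=set0 -> irresolvable_in U.

(* Soundness: in a T_D space the derived-set operator satisfies d(dA) ⊆ dA,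
   which validates 4.  The McKinsey axiom can fail at x only if all points of
   a punctured open neighbourhood of x are limit points of both A and its
   complement; in a crowded T_D space that punctured neighbourhood is a
   nonempty open set on which A and its complement are disjoint dense sets,
   contradicting open irresolvability.
   Completeness: in the canonical K4M frame every world sees an endpoint, a
   world whose only successor is itself, because thanks to M the formulas
   □t ∨ □¬t are jointly consistent with the boxed part of any maximal
   consistent set.  Take countably many copies (w, n) of every world w and
   call O open when, for each (w, n) in O and each successor u of w, the
   indices of the copies of u lying in O form a set of a fixed nonprincipal
   ultrafilter on ℕ.  A copy of w is then a limit point of the copies of a set
   of worlds exactly when w sees one of them, which yields the truth lemma;
   nonprincipality gives T_D and crowdedness, and at an endpoint any two
   dense subsets of an open set have ultrafilter-large, hence meeting,
   fibres. *)

From HB Require Import structures.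
From mathcomp Require Import all_boot all_order.
From mathcomp Require Import all_classical all_reals topology.
Set Implicit Arguments. Unset Strict Implicit. Unset Printing Implicit Defensive.
Local Open Scope classical_set_scope.

Ltac taut := let v := fresh "v" in
  rewrite /tautology => v /=;
  repeat match goal with
  | |- context [beval v ?x] => case: (beval v x)
  | |- context [v ?x] => case: (v x)
  end; done.

Lemma K4M_mp1 a b : tautology (Imp a b) -> K4M a -> K4M b.
Proof. by move=> /K4M_taut; apply: K4M_MP. Qed.

Lemma K4M_mp2 a b c : tautology (Imp a (Imp b c)) -> K4M a -> K4M b -> K4M c.
Proof. by move=> t Ha; apply/K4M_MP/(K4M_mp1 t Ha). Qed.

Lemma K4M_mp3 a b c d :
  tautology (Imp a (Imp b (Imp c d))) -> K4M a -> K4M b -> K4M c -> K4M d.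
Proof. by move=> t Ha Hb; apply/K4M_MP/(K4M_mp2 t Ha Hb). Qed.

Lemma K4M_mp4 a b c d e : tautology (Imp a (Imp b (Imp c (Imp d e)))) ->
  K4M a -> K4M b -> K4M c -> K4M d -> K4M e.
Proof. by move=> t Ha Hb Hc; apply/K4M_MP/(K4M_mp3 t Ha Hb Hc). Qed.

Lemma imp_trans a b c : K4M (Imp a b) -> K4M (Imp b c) -> K4M (Imp a c).
Proof. by apply: K4M_mp2; taut. Qed.

Fixpoint imps (l : seq form) (c : form) : form :=
  if l is a :: l' then Imp a (imps l' c) else c.

Lemma beval_imps v l c : beval v (imps l c) = (all (beval v) l ==> beval v c).
Proof. by elim: l => [|a l IH] //=; rewrite IH; case: (beval v a). Qed.

Lemma box_mono a b : K4M (Imp a b) -> K4M (Imp (Box a) (Box b)).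
Proof. by move/K4M_Nec; apply: K4M_MP (K4M_K a b). Qed.

Lemma box_imps l c : K4M (Imp (Box (imps l c)) (imps (map Box l) (Box c))).
Proof.
elim: l => [|a l IH] /=; first by apply: K4M_taut; taut.
by apply: K4M_mp2 (K4M_K a (imps l c)) IH; taut.
Qed.

Lemma box_and a b : K4M (Imp (Box a) (Imp (Box b) (Box (And a b)))).
Proof.
apply: K4M_MP (box_imps [:: a; b] (And a b)) _.
by apply/K4M_Nec/K4M_taut; taut.
Qed.

Lemma dia_mono a b : K4M (Imp a b) -> K4M (Imp (Dia a) (Dia b)).
Proof.
move=> ab; have /box_mono : K4M (Imp (Neg b) (Neg a)).
  by apply: K4M_mp1 ab; taut.
by apply: K4M_mp1; taut.
Qed.

Lemma box_dia a b : K4M (Imp (Box a) (Imp (Dia b) (Dia (And a b)))).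
Proof.
have l_nb : K4M (Box (imps [:: a; Neg (And a b)] (Neg b))).
  by apply/K4M_Nec/K4M_taut; taut.
have := K4M_MP (box_imps _ _) l_nb.
by apply: K4M_mp1; taut.
Qed.

Lemma box_box a : K4M (Imp (Box a) (Box (Box a))).
Proof.
have nn_intro : K4M (Imp (Box a) (Box (Neg (Neg a)))).
  by apply/box_mono/K4M_taut; taut.
have nn_elim c : K4M (Imp (Box (Neg (Neg c))) (Box c)).
  by apply/box_mono/K4M_taut; taut.
have nn_elim2 : K4M (Imp (Box (Neg (Neg (Box (Neg (Neg a)))))) (Box (Box a))).
  by apply: imp_trans (nn_elim _) (box_mono (nn_elim a)).
by apply: K4M_mp3 nn_intro (K4M_4 (Neg a)) nn_elim2; taut.
Qed.

Lemma dia_top : K4M (Dia Top).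
Proof.
have H1 : K4M (Imp (Box Bot) (Box (Dia Bot))).
  by apply/box_mono/K4M_taut; taut.
have H2 : K4M (Imp (Box Bot) (Box (Neg (Box Bot)))).
  by apply/box_mono/K4M_taut; taut.
have H3 : K4M (Imp (Box (Neg Top)) (Box Bot)).
  by apply/box_mono/K4M_taut; taut.
by apply: K4M_mp4 H1 (K4M_M Bot) H2 H3; taut.
Qed.

Definition settled (t : form) : form := Or (Box t) (Box (Neg t)).

Fixpoint settled_all (l : seq form) : form :=
  if l is t :: l' then And (settled t) (settled_all l') else Top.

Lemma settled_all_box l : K4M (Imp (settled_all l) (Box (settled_all l))).
Proof.
elim: l => [|t l IH] /=.
  have : K4M (Box Top) by apply/K4M_Nec/K4M_taut; taut.
  by apply: K4M_mp1; taut.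
have Ht : K4M (Imp (Box t) (Box (settled t))).
  by apply: imp_trans (box_box t) _; apply/box_mono/K4M_taut; taut.
have Hnt : K4M (Imp (Box (Neg t)) (Box (settled t))).
  by apply: imp_trans (box_box (Neg t)) _; apply/box_mono/K4M_taut; taut.
by apply: K4M_mp4 Ht Hnt (box_and (settled t) (settled_all l)) IH; taut.
Qed.

(* McKinsey: □◇t → ◇□t, so one more formula can always be settled above a
   point where the previous ones are. *)
Lemma settled_all_cons t l :
  K4M (Imp (settled_all l) (Dia (settled_all (t :: l)))).
Proof.
set c := settled_all l; set c' := settled_all (t :: l).
have Hpos : K4M (Imp (Box c) (Imp (Dia (Box t)) (Dia c'))).
  apply: imp_trans (box_dia c (Box t)) _.
  have : K4M (Imp (Dia (And c (Box t))) (Dia c')).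
    by apply/dia_mono/K4M_taut; taut.
  by apply: K4M_mp1; taut.
have Hneg : K4M (Imp (Box c) (Imp (Dia (Box (Neg t))) (Dia c'))).
  apply: imp_trans (box_dia c (Box (Neg t))) _.
  have : K4M (Imp (Dia (And c (Box (Neg t)))) (Dia c')).
    by apply/dia_mono/K4M_taut; taut.
  by apply: K4M_mp1; taut.
by apply: K4M_mp4 (settled_all_box l) Hpos Hneg (K4M_M t); taut.
Qed.

Lemma dia_settled_all l : K4M (Dia (settled_all l)).
Proof.
elim: l => [|t l IH]; first exact: dia_top.
have := K4M_4 (settled_all (t :: l)).
by apply: K4M_mp3 IH (dia_mono (settled_all_cons t l)); taut.
Qed.

HB.instance Definition _ := gen_eqMixin form.

Definition der (S : set form) (p : form) :=
  exists l : seq form, (forall a, a \in l -> S a) /\ K4M (imps l p).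

Definition consistent (S : set form) := ~ der S Bot.

Definition mcs (S : set form) := consistent S /\ forall p, S p \/ S (Neg p).

Lemma der_K S p : K4M p -> der S p.
Proof. by exists [::]. Qed.

Lemma der_in S p : S p -> der S p.
Proof.
move=> Sp; exists [:: p]; split; last by apply: K4M_taut; taut.
by move=> a; rewrite inE => /eqP ->.
Qed.

Lemma der_sub S T p : S `<=` T -> der S p -> der T p.
Proof. by move=> ST [l [Sl Hl]]; exists l; split => // a /Sl /ST. Qed.

Lemma der_mp S a b : der S (Imp a b) -> der S a -> der S b.
Proof.
move=> [l1 [S1 H1]] [l2 [S2 H2]]; exists (l1 ++ l2); split.
  by move=> x; rewrite mem_cat => /orP [/S1|/S2].
apply: K4M_mp2 H1 H2 => v /=; rewrite !beval_imps all_cat /=.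
by case: (all _ l1); case: (all _ l2); case: (beval v a); case: (beval v b).
Qed.

Lemma der_taut S a b : tautology (Imp a b) -> der S a -> der S b.
Proof. by move=> t; apply/der_mp/der_K/K4M_taut. Qed.

Lemma der_deduction S a b : der (S `|` [set a]) b -> der S (Imp a b).
Proof.
move=> [l [Sl Hl]]; exists [seq x <- l | x != a]; split.
  move=> x; rewrite mem_filter => /andP [xa /Sl [//|/= xa']].
  by rewrite xa' eqxx in xa.
apply: K4M_mp1 Hl => v /=; rewrite !beval_imps /=.
have : all (beval v) [seq x <- l | x != a] -> beval v a -> all (beval v) l.
  move=> /allP lv va; apply/allP => x xl.
  by case: (eqVneq x a) => [->|xa] //; apply: lv; rewrite mem_filter xa.
by case: (all _ l); case: (all _ [seq x <- l | _]); case: (beval v a);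
  case: (beval v b) => // /(_ isT isT).
Qed.

Lemma seq_sub_chain (T : eqType) (S : set T) (F : set (set T)) (l : seq T) :
  total_on F subset -> (forall a, a \in l -> (S `|` \bigcup_(X in F) X) a) ->
  exists2 B, B = set0 \/ F B & forall a, a \in l -> (S `|` B) a.
Proof.
move=> Ftot; elim: l => [|a l IH] Hl; first by exists set0; [left|].
have [B FB lB] : exists2 B, B = set0 \/ F B & forall x, x \in l -> (S `|` B) x.
  by apply: IH => x xl; apply: Hl; rewrite inE xl orbT.
case: (Hl a (mem_head _ _)) => [Sa|[C FC Ca]].
  by exists B => // x; rewrite inE => /predU1P [->|/lB]; [left|].
have [BC|CB] : B `<=` C \/ C `<=` B.
- case: FB => [->|FB]; first by left.
  by apply: Ftot.
- exists C; [by right|move=> x; rewrite inE => /predU1P [->|/lB [Sx|/BC Cx]]].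
  + by right.
  + by left.
  + by right.
- by exists B => // x; rewrite inE => /predU1P [->|/lB //]; right; apply: CB.
Qed.

Lemma consistent_chain S (F : set (set form)) : consistent S ->
  F `<=` [set A | consistent (S `|` A)] -> total_on F subset ->
  consistent (S `|` \bigcup_(X in F) X).
Proof.
move=> cS FP Ftot [l [Sl Hl]].
have [B [->|FB] lB] := seq_sub_chain Ftot Sl.
  by apply: cS; exists l; split => // a /lB; rewrite setU0.
by apply: (FP _ FB); exists l.
Qed.

Lemma lindenbaum S : consistent S -> exists2 M, S `<=` M & mcs M.
Proof.
move=> cS.
have [A [cA Amax]] := Zorn_bigcup (fun F => @consistent_chain S F cS).
exists (S `|` A); first by move=> x; left.
split => // p; apply: contrapT => /not_orP [np nnp].
have refute q : ~ (S `|` A) q -> der (S `|` A) (Neg q).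
  move=> nq; apply: der_deduction; apply: contrapT; rewrite -setUA.
  apply: Amax; rewrite properEneq; split; last by move=> x; left.
  by apply/eqP => AE; apply: nq; right; rewrite AE; right.
by apply: cA; apply: der_mp (refute _ nnp) (refute _ np).
Qed.

Lemma der0 p : der set0 p -> K4M p.
Proof. by case=> -[|a l] [Hl Hk] //; have := Hl a (mem_head _ _). Qed.

Lemma consistent_Neg p : ~ K4M p -> consistent [set Neg p].
Proof.
move=> nKp incons; apply/nKp/der0/(der_taut (a := Neg (Neg p))); first by taut.
by apply: der_deduction; apply: der_sub incons => q ->; right.
Qed.

Section MaximalConsistent.
Variable M : set form.
Hypothesis mcsM : mcs M.

Lemma mcs_der p : der M p -> M p.
Proof.
move=> Mp; case: (mcsM.2 p) => // Mnp; exfalso; apply: mcsM.1.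
exact: der_mp (der_in Mnp) Mp.
Qed.

Lemma mcs_K p : K4M p -> M p.
Proof. by move/der_K/mcs_der. Qed.

Lemma mcs_bot : ~ M Bot.
Proof. by move/der_in; apply: mcsM.1. Qed.

Lemma mcs_imp a b : M (Imp a b) <-> (M a -> M b).
Proof.
split => [Mab Ma|H].
  by apply: mcs_der; apply: der_mp (der_in Mab) (der_in Ma).
apply: mcs_der; case: (mcsM.2 a) => [/H|] /der_in; apply: der_taut; taut.
Qed.

Lemma mcs_neg a : M (Neg a) <-> ~ M a.
Proof. by rewrite /Neg mcs_imp; split => [H /H|H /H //]; apply: mcs_bot. Qed.

End MaximalConsistent.

Definition can_rel (M N : set form) := forall p, M (Box p) -> N p.

Lemma box_der M a : mcs M -> der [set p | M (Box p)] a -> M (Box a).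
Proof.
move=> mcsM [l [Ml Hl]]; apply: (mcs_der mcsM); exists (map Box l); split.
  by move=> x /mapP [y /Ml My ->].
exact: K4M_MP (box_imps l a) (K4M_Nec Hl).
Qed.

Lemma can_rel_witness M a : mcs M -> ~ M (Box a) ->
  exists N, [/\ mcs N, can_rel M N & ~ N a].
Proof.
move=> mcsM nMa.
have [|N MN mcsN] := @lindenbaum ([set p | M (Box p)] `|` [set Neg a]).
  move/der_deduction/(der_taut (b := a)) => Ha; apply/nMa/(box_der mcsM).
  by apply: Ha; taut.
exists N; split => //; first by move=> p Mp; apply: MN; left.
by apply/(mcs_neg mcsN)/MN; right.
Qed.

Lemma can_rel_trans M N P : mcs M -> can_rel M N -> can_rel N P -> can_rel M P.
Proof.
move=> mcsM MN NP p Mp; apply/NP/MN.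
exact: (mcs_imp mcsM _ _).1 (mcs_K mcsM (box_box p)) Mp.
Qed.

Lemma der_settled B p : der (B `|` range settled) p ->
  exists ls, der B (Imp (settled_all ls) p).
Proof.
move=> [l []]; elim: l p => [|a l IH] p Hl Hk /=.
  by exists [::]; apply: der_K; apply: K4M_mp1 Hk; taut.
have [ls Hls] : exists ls, der B (Imp (settled_all ls) (Imp a p)).
  apply: IH => [x xl|]; first by apply: Hl; rewrite inE xl orbT.
  apply: K4M_mp1 Hk => v /=; rewrite !beval_imps /=.
  by case: (all _ l); case: (beval v a); case: (beval v p).
case: (Hl a (mem_head _ _)) => [Ba|[t _ ta]].
  by exists ls; apply: der_mp (der_taut _ Hls) (der_in Ba); taut.
by exists (t :: ls); rewrite -ta in Hls; apply: der_taut Hls; taut.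
Qed.

Lemma can_rel_endpoint M : mcs M -> exists U,
  [/\ mcs U, can_rel M U & forall N, mcs N -> can_rel U N -> N = U].
Proof.
move=> mcsM.
have [|E SE mcsE] := @lindenbaum ([set p | M (Box p)] `|` range settled).
  move=> /der_settled [ls Hls].
  have /(mcs_neg mcsM) := mcs_K mcsM (dia_settled_all ls); apply.
  exact: box_der mcsM Hls.
have ME : can_rel M E by move=> p Mp; apply: SE; left.
have Esettled t : E (Box t) \/ E (Box (Neg t)).
  have : E (settled t) by apply: SE; right; exists t.
  rewrite /settled /Or (mcs_imp mcsE) (mcs_neg mcsE).
  by case: (pselect (E (Box t))) => [|nt /(_ nt)]; [left|right].
have succ_uniq N N' : mcs N -> mcs N' -> can_rel E N -> can_rel E N' -> N = N'.
  move=> mcsN mcsN' EN EN'; apply/seteqP; split => p.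
    by case: (Esettled p) => [/EN' //|/EN /(mcs_neg mcsN)].
  by case: (Esettled p) => [/EN //|/EN' /(mcs_neg mcsN')].
have nEBnT : ~ E (Box (Neg Top)) by apply/(mcs_neg mcsE)/(mcs_K mcsE dia_top).
have [U [mcsU EU _]] := can_rel_witness mcsE nEBnT.
exists U; split => [//||N mcsN UN]; first exact: can_rel_trans ME EU.
by apply: succ_uniq => //; apply: can_rel_trans EU UN.
Qed.

Section DerivedSets.
Variable X : topologicalType.
Implicit Types (A B O U : set X) (x z : X).

Lemma limit_pointS A B : A `<=` B -> limit_point A `<=` limit_point B.
Proof. by move=> AB x Ax U xU; have [y [? /AB ? ?]] := Ax U xU; exists y. Qed.

Lemma limit_pointU A B x :
  limit_point (A `|` B) x -> limit_point A x \/ limit_point B x.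
Proof.
move=> ABx; apply: contrapT => /not_orP [].
rewrite !not_limit_pointE => -[U xU AU] [V xV BV].
have [y [/eqP yx [Ay|By] [Uy Vy]]] := ABx _ (filterI xU xV).
- by apply: yx; apply: AU.
- by apply: yx; apply: BV.
Qed.

Lemma limit_point0 : limit_point (@set0 X) = set0.
Proof. by apply/seteqP; split => // x /(_ setT filterT) [y [_ []]]. Qed.

Lemma not_limit_point_set1 x : ~ limit_point [set x] x.
Proof. by move=> /(_ setT filterT) [y [/eqP yx /= xy _]]. Qed.

Lemma TD_punctured_open x : T_D X ->
  exists W, [/\ open W, W x & open (W `\ x)].
Proof.
move=> TD; exists (~` limit_point [set x]); split.
- exact: closed_openC.
- exact: not_limit_point_set1.
- rewrite openE => z [Wz zx].
  have [N zN xN] : exists2 N, nbhs z N & [set x] `&` N `<=` [set z].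
    by rewrite -not_limit_pointE.
  apply: filterS (filterI (open_nbhs_nbhs _) zN).
    move=> y [Wy Ny]; split; first exact: Wy.
    by move=> yx; rewrite yx in Ny; apply/zx/esym/xN.
  by split => //; exact: closed_openC.
Qed.

Lemma TD_limit_point_limit_point A : T_D X ->
  limit_point (limit_point A) `<=` limit_point A.
Proof.
move=> TD x Ax U; rewrite nbhsE => -[O [oO Ox] OU].
have [W [oW Wx oWx]] := TD_punctured_open x TD.
have [z [zx Az [Oz Wz]]] :=
  Ax _ (open_nbhs_nbhs (conj (openI oO oW) (conj Ox Wx))).
have zOWx : (O `&` (W `\ x)) z.
  by split => //; split => // /eqP; rewrite (negPf zx).
have [y [_ Ay [Oy [_ yx]]]] :=
  Az _ (open_nbhs_nbhs (conj (openI oO oWx) zOWx)).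
by exists y; split => //; [apply/eqP|apply: OU].
Qed.

Lemma crowded_punctured_nbhs x O : crowded X -> open O -> O x ->
  exists2 z, O z & z != x.
Proof.
move=> cr oO Ox; apply: contrapT => nO.
apply: (cr x); split; first exact: mem_set.
exists O; first exact: open_nbhs_nbhs.
apply/seteqP; split => [y [Oy _]|y ->] //=.
by apply: contrapT => /eqP yx; apply: nO; exists y.
Qed.

Lemma dense_in_limit_point O B : open O ->
  O `<=` limit_point B -> dense_in O (B `&` O).
Proof.
move=> oO OB; split => [? []//|G oG [z [Oz Gz]]].
have [y [_ By [Oy Gy]]] :=
  OB z Oz _ (open_nbhs_nbhs (conj (openI oO oG) (conj Oz Gz))).
by exists y.
Qed.

Lemma dense_in_nonempty U A : dense_in U A -> U !=set0 -> A !=set0.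
Proof.
move=> [_ dA] [z Uz].
by have [|y [Ay _]] := dA setT openT; [exists z|exists y].
Qed.

Lemma openly_irresolvable_limit_point O A : openly_irresolvable X ->
  open O -> O !=set0 -> ~ O `<=` limit_point A `&` limit_point (~` A).
Proof.
move=> oi oO O0 OA; apply: (oi O oO O0); exists (A `&` O), (~` A `&` O).
have dA : dense_in O (A `&` O) by apply: dense_in_limit_point => // z /OA [].
have dnA : dense_in O (~` A `&` O).
  by apply: dense_in_limit_point => // z /OA [].
split => //; [exact: dense_in_nonempty dA O0|exact: dense_in_nonempty dnA O0|].
by apply/seteqP; split => y // [[Ay _] [nAy _]].
Qed.

Lemma TD_mckinsey A x : T_D X -> crowded X -> openly_irresolvable X ->
  ~ limit_point (~` limit_point A) x -> limit_point (~` limit_point (~` A)) x.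
Proof.
move=> TD cr oi; rewrite not_limit_pointE => -[U xU UA].
apply: contrapT; rewrite not_limit_pointE => -[V xV VnA].
have : nbhs x (U `&` V) by apply: filterI.
rewrite nbhsE => -[O [oO Ox] OUV].
have [W [oW Wx oWx]] := TD_punctured_open x TD.
have [z [Oz Wz] zx] := crowded_punctured_nbhs cr (openI oO oW) (conj Ox Wx).
apply: (openly_irresolvable_limit_point (A := A) oi (openI oO oWx)).
  by exists z; split => //; split => // /eqP; rewrite (negPf zx).
move=> y [/OUV [Uy Vy] [_ yx]]; split; apply: contrapT => ny; apply: yx.
- exact: UA (conj ny Uy).
- exact: VnA (conj ny Vy).
Qed.

End DerivedSets.

Section Soundness.
Variable X : topologicalType.
Implicit Types (v : nat -> set X) (x : X).

Lemma dsem_ImpE v a b x : dsem v (Imp a b) x <-> (dsem v a x -> dsem v b x).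
Proof.
split => [[na|] //|H] /=.
by case: (pselect (dsem v a x)) => [/H|]; [right|left].
Qed.

Lemma dsem_DiaE v a : dsem v (Dia a) = limit_point (dsem v a).
Proof. by rewrite /Dia /Neg /= !setU0 !setCK. Qed.

Lemma beval_dsem v x p :
  beval (fun q => `[< dsem v q x >]) p = `[< dsem v p x >].
Proof.
elim: p => [n||a IHa b IHb|a] //=; first by rewrite asboolF.
rewrite IHa IHb; apply/idP/asboolP.
  by case/orP => [/asboolPn|/asboolP]; [left|right].
by case=> [/asboolPn|/asboolP] ->; rewrite ?orbT.
Qed.

Lemma tautology_d_valid p : tautology p -> d_valid X p.
Proof. by move=> tp v x; apply/asboolP; rewrite -beval_dsem. Qed.

Lemma K4M_d_valid p : T_D X -> crowded X -> openly_irresolvable X ->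
  K4M p -> d_valid X p.
Proof.
move=> TD cr oi.
elim => {p} [p /tautology_d_valid //|a b v x|a v x|a v x||a _ Ha v x].
- rewrite !dsem_ImpE => nab na nb.
  have sub : ~` dsem v b `<=` ~` dsem v (Imp a b) `|` ~` dsem v a.
    move=> z nbz; case: (pselect (dsem v a z)) => az; [left|right] => //.
    by move=> /dsem_ImpE /(_ az).
  by case: (limit_pointU (limit_pointS sub nb)).
- by rewrite dsem_ImpE !dsem_DiaE; apply: TD_limit_point_limit_point.
- rewrite dsem_ImpE !dsem_DiaE => BDa.
  by apply: TD_mckinsey => //; rewrite -dsem_DiaE.
- by move=> a b _ Hab _ Ha v x; apply: (dsem_ImpE v a b x).1 (Ha v x).
- have nav : ~` dsem v a = set0.
    by apply/seteqP; split => z // /(_ (Ha v z)).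
  by rewrite /= nav limit_point0.
Qed.

End Soundness.

Definition world := {M : set form | mcs M}.

Definition sees (w u : world) := can_rel (sval w) (sval u).

Lemma sees_trans w u z : sees w u -> sees u z -> sees w z.
Proof. exact: can_rel_trans (svalP w). Qed.

Lemma world_endpoint (w : world) :
  exists2 e : world, sees w e & forall u, sees e u -> u = e.
Proof.
have [U [mcsU wU Uend]] := can_rel_endpoint (svalP w).
by exists (exist _ U mcsU) => // -[u mcsu] /= Uu; apply/eq_exist/Uend.
Qed.

Definition ultra_nat_sig := cid (ultraFilterLemma (@eventually_filter)).

Definition ultra_nat : set_system nat := sval ultra_nat_sig.

#[local] Instance ultra_nat_ultra : UltraFilter ultra_nat :=
  (svalP ultra_nat_sig).1.

Lemma ultra_nat_cofinite n : ultra_nat (~` [set n]).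
Proof.
apply: (svalP ultra_nat_sig).2; exists n.+1 => // m /= nm mn.
by rewrite mn ltnn in nm.
Qed.

Definition point := (world * nat)%type.
HB.instance Definition _ := gen_eqMixin point.
HB.instance Definition _ := gen_choiceMixin point.

Definition fibre (O : set point) (u : world) : set nat := [set m | O (u, m)].

Definition ultra_open (O : set point) :=
  forall w n u, O (w, n) -> sees w u -> ultra_nat (fibre O u).

Lemma ultra_openT : ultra_open setT.
Proof. by move=> w n u _ _; apply: filterS filterT. Qed.

Lemma ultra_openI : setI_closed ultra_open.
Proof.
move=> O1 O2 oO1 oO2 w n u [O1x O2x] wu.
by apply: filterS (filterI (oO1 _ _ _ O1x wu) (oO2 _ _ _ O2x wu)) => m [].
Qed.

Lemma ultra_open_bigcup (I : Type) (f : I -> set point) :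
  (forall i, ultra_open (f i)) -> ultra_open (\bigcup_i f i).
Proof.
move=> ofi w n u [i _ fi] wu.
by apply: filterS (ofi i _ _ _ fi wu) => m fim; exists i.
Qed.

HB.instance Definition _ :=
  isOpenTopological.Build point ultra_openT ultra_openI ultra_open_bigcup.

Lemma limit_point_worlds (A : set world) w n :
  limit_point [set p : point | A p.1] (w, n) <-> exists2 u, A u & sees w u.
Proof.
split => [lA|[u Au wu] U].
  apply: contrapT => nA.
  pose O := [set p : point | p = (w, n) \/ sees w p.1].
  have oO : open O.
    move=> w' n' u Ow' w'u; apply: filterS filterT => m _; right => /=.
    by case: Ow' => [[<- _]|ww']; last apply: sees_trans ww' w'u.
  have [y [yx Ay [yE|wy]]] := lA O (open_nbhs_nbhs (conj oO (or_introl erefl))).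
    by rewrite yE eqxx in yx.
  by apply: nA; exists y.1.
rewrite nbhsE => -[O [oO Ox] OU].
have [m [Om mn]] := filter_ex (filterI (oO _ _ _ Ox wu) (ultra_nat_cofinite n)).
by exists (u, m); split => //; [apply/eqP => -[_ /mn]|apply: OU].
Qed.

Definition can_val (n : nat) : set point := [set p | sval p.1 (Var n)].

Lemma dsem_can_val q (p : point) : dsem can_val q p <-> sval p.1 q.
Proof.
case: p => [w n]; elim: q w n => [k||a IHa b IHb|a IHa] w n //.
- by split => // /(mcs_bot (svalP w)).
- by rewrite (dsem_ImpE can_val a b (w, n)) (mcs_imp (svalP w)) IHa IHb.
- rewrite /=; have -> : ~` dsem can_val a = [set p : point | ~ sval p.1 a].
    by apply/seteqP; split => -[u m] /=; rewrite IHa.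
  rewrite (limit_point_worlds (fun u => ~ sval u a)).
  split => [nwa|wa [u ua wu]].
    apply: contrapT => nBa.
    have [N [mcsN wN Na]] := can_rel_witness (svalP w) nBa.
    by apply: nwa; exists (exist _ N mcsN).
  exact/ua/wu.
Qed.

Lemma point_TD : T_D point.
Proof.
move=> x; suff -> : limit_point [set x] = set0 by exact: closed0.
apply/seteqP; split => // -[w n] lx.
pose O := [set p : point | (p = (w, n) \/ sees w p.1) /\ p <> x].
have oO : open O.
  move=> w' n' u [Ow' _] w'u; apply: filterS (ultra_nat_cofinite x.2) => m mx.
  split; last by move=> ux; apply: mx; rewrite -ux.
  by right; case: Ow' => [[<- _]|ww'] //; apply: sees_trans ww' w'u.
have [|y [_ yx [_ nyx]]] := lx O (open_nbhs_nbhs (conj oO _)); last first.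
  exact: nyx yx.
split; first by left.
move=> wx; have [y [/eqP yw /= yx _]] := lx setT filterT.
by apply: yw; rewrite yx wx.
Qed.

Lemma point_crowded : crowded point.
Proof.
move=> [w n] [_ [V wV VE]]; have [e we _] := world_endpoint w.
have /(_ V wV) [y [/eqP yw _ Vy]] :
    limit_point [set p : point | setT p.1] (w, n).
  by rewrite limit_point_worlds; exists e.
by have : (V `&` setT) y by []; rewrite VE.
Qed.

(* Otherwise [{e} × (fibre O e `\` fibre D e)] is a nonempty open subset of
   [O] missing [D]; it is open because [e] is an endpoint. *)
Lemma dense_in_fibre (O D : set point) (w e : world) n :
  open O -> O (w, n) -> sees w e -> (forall u, sees e u -> u = e) ->
  dense_in O D -> ultra_nat (fibre D e).
Proof.
move=> oO Own we eend [_ dD]; have Oe := oO _ _ _ Own we.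
case: (in_ultra_setVsetC (fibre D e) ultra_nat_ultra) => // nDe.
pose G := [set p : point | p.1 = e /\ (fibre O e `\` fibre D e) p.2].
have oG : open G.
  move=> _ _ u [/= -> _] eu; rewrite (eend u eu).
  by apply: filterS (filterI Oe nDe) => m.
have [m [Om nDm]] := filter_ex (filterI Oe nDe).
have [|[u k] [Duk [/= ue [_ nDk]]]] := dD G oG; first by exists (e, m).
by rewrite ue in Duk.
Qed.

Lemma point_openly_irresolvable : openly_irresolvable point.
Proof.
move=> O oO [[w n] Own] [A [B [dA dB _ _ AB]]].
have [e we eend] := world_endpoint w.
have [m [Aem Bem]] := filter_ex (filterI (dense_in_fibre oO Own we eend dA)
  (dense_in_fibre oO Own we eend dB)).
by have : (A `&` B) (e, m) by []; rewrite AB.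
Qed.

Lemma point_d_valid_K4M p : d_valid point p -> K4M p.
Proof.
move=> valid; apply: contrapT => /consistent_Neg/lindenbaum [M Mnp mcsM].
have /dsem_can_val := valid can_val (exist _ M mcsM, 0%N).
exact/(mcs_neg mcsM)/Mnp.
Qed.

Theorem theorem12 (p : form) :
  K4M p <->
  (forall X : topologicalType,
      T_D X -> crowded X -> openly_irresolvable X -> d_valid X p).
Proof.
split => [Kp X TD cr oi|valid]; first exact: K4M_d_valid.
apply/point_d_valid_K4M/valid.
- exact: point_TD.
- exact: point_crowded.
- exact: point_openly_irresolvable.
Qed.
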